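(* In the setting of the context, let $\varphi:TW\to W\times\mathbb{C}^N$ be the bundle map $\varphi(X)=\sum_{j=1}^N\tilde\Omega_{Nj}(X)\,\mathbf{e}_j$. Then $\varphi$ is an isomorphism at every point of $W$ if and only if $P_{N,i_{k,0}}\neq 0$ for all $k=1,\dots,n$ at every point of $W$, where $i_{k,0}:=m_1+\dots+m_{k-1}+1$ (the index of the first row/column of the $k$-th block).
   Context: Let $N\ge1$, $W\subset\mathbb{C}^N$ open, and $T,\tilde\Omega,B_\infty=\mathrm{diag}(\lambda_1,\dots,\lambda_N)$ define an extended generalized Okubo system on $\mathbb{P}^1\times W$: $T$ is an $N\times N$ matrix of holomorphic functions, $\tilde\Omega$ an $N\times N$ matrix of holomorphic $1$-forms, $\lambda_i-\lambda_j\notin\mathbb{Z}\setminus\{0\}$ for $i\ne j$, and $[T,\tilde\Omega]=0$, $\tilde\Omega\wedge\tilde\Omega=0$, $dT+\tilde\Omega+[\tilde\Omega,B_\infty]=0$, $d\tilde\Omega=0$. Assume there is an invertible holomorphic matrix $P$ on $W$ with $P^{-1}TP=Z_1\oplus\cdots\oplus Z_n$ and $P^{-1}\tilde\Omega P=-(dZ_1\oplus\cdots\oplus dZ_n)$, where $m_1+\dots+m_n=N$, $\Lambda_k$ is the $m_k\times m_k$ matrix with $1$'s on the superdiagonal and zeros elsewhere, $Z_k=\sum_{l=0}^{m_k-1}z_{k,l}\Lambda_k^l$, the $z_{k,0}$ are pairwise distinct on $W$, and the holomorphic functions $(z_{k,l})_{k,l}$ form a coordinate system on $W$. $\mathbf{e}_1,\dots,\mathbf{e}_N$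 is the standard basis of $\mathbb{C}^N$. *)

From HB Require Import structures.
From mathcomp Require Import all_boot all_order all_algebra.
Set Implicit Arguments. Unset Strict Implicit. Unset Printing Implicit Defensive.
Import Order.TTheory GRing.Theory Num.Theory.
Local Open Scope ring_scope.

Section Okubo.
Variables (C : numClosedFieldType) (N : nat).

(* l^1 norm on C^N (row vectors); equivalent to any norm on C^N *)
Definition vnorm (v : 'rV[C]_N) : C := \sum_(i < N) `|v 0 i|.

Definition open_set (W : {pred 'rV[C]_N}) : Prop :=
  forall w, w \in W -> exists2 r : C, 0 < r &
    forall v, vnorm (v - w) < r -> v \in W.

Definition is_diff (f : 'rV[C]_N -> C) (w l : 'rV[C]_N) : Prop :=
  forall eps : C, 0 < eps -> exists2 d : C, 0 < d &
    forall h : 'rV[C]_N, vnorm h < d ->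
      `|f (w + h) - f w - \sum_(i < N) l 0 i * h 0 i| <= eps * vnorm h.

Definition holo (W : {pred 'rV[C]_N}) (f : 'rV[C]_N -> C) : Prop :=
  forall w, w \in W -> exists l, is_diff f w l.

(* (z_a)_a is a holomorphic coordinate system on W: injective, holomorphic,
   with invertible Jacobian at every point (biholomorphic onto an open set) *)
Definition coord_system (W : {pred 'rV[C]_N}) (F : 'rV[C]_N -> 'rV[C]_N) : Prop :=
  {in W &, injective F} /\
  forall w, w \in W -> exists2 J : 'M[C]_N, J \in unitmx &
    forall a : 'I_N, is_diff (fun v => F v 0 a) w (row a J).

(* A matrix of 1-forms Omega = sum_l Om_l dx_l is encoded by Om : point -> 'I_N -> 'M_N;
   its value on a tangent vector X : *)
Definition OmX (Om : 'rV[C]_N -> 'I_N -> 'M[C]_N) (w X : 'rV[C]_N) : 'M[C]_N :=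
  \sum_(l < N) X 0 l *: Om w l.

(* blocks: sizes m : 'I_n -> nat, block k starts at index start m k (0-based) *)
Definition start n (m : 'I_n -> nat) (k : 'I_n) : nat :=
  (\sum_(j < n | (j < k)%N) m j)%N.

(* Z_1 (+) ... (+) Z_n with Z_k = sum_l z_{k,l} Lambda_k^l *)
Definition Zmat n (m : 'I_n -> nat) (z : 'I_n -> nat -> 'rV[C]_N -> C)
  (w : 'rV[C]_N) : 'M[C]_N :=
  \matrix_(a < N, b < N) \sum_(k < n)
     if [&& (start m k <= a)%N, (a <= b)%N & (b < start m k + m k)%N]
     then z k (b - a)%N w else 0.

(* the coordinate map w |-> (z_{k,l}(w))_{k,l}, ordered block by block *)
Definition zvec n (m : 'I_n -> nat) (z : 'I_n -> nat -> 'rV[C]_N -> C)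
  (w : 'rV[C]_N) : 'rV[C]_N :=
  \row_(a < N) \sum_(k < n)
     if (start m k <= a < start m k + m k)%N then z k (a - start m k)%N w else 0.

Definition phi (Om : 'rV[C]_N -> 'I_N -> 'M[C]_N) (iN : 'I_N) (w X : 'rV[C]_N)
  : 'rV[C]_N :=
  \sum_(j < N) (OmX Om w X) iN j *: delta_mx 0 j.

End Okubo.

From HB Require Import structures.
From mathcomp Require Import all_boot all_order all_algebra.
From mathcomp Require Import zify ring.
Set Implicit Arguments.
Unset Strict Implicit.
Unset Printing Implicit Defensive.

Import Order.TTheory GRing.Theory Num.Theory.
Local Open Scope ring_scope.

(* At a point w, P^-1 Omega P = - dZ and the entries of Z are the coordinates
   z_{k,l}; through the Jacobian J of the coordinate map, dZ(X) becomes the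
   upper triangular block-Toeplitz matrix T(Y) built on Y = X J^T.  Hence
   phi(X) = - p T(Y) P^-1 with p the relevant row of P, and since J and P are
   invertible, phi is bijective iff Y |-> p T(Y) has trivial kernel.  Within
   block k this map is a triangular system in the coordinates of Y whose
   diagonal coefficient is p at the first index of the block, so the kernel is
   trivial iff these entries are nonzero. *)

Lemma exists_bracket (g : nat -> nat) c t : (g 0 <= c)%N -> (c < g t)%N ->
  exists2 u, (u < t)%N & (g u <= c < g u.+1)%N.
Proof.
elim: t => [|t IH] g0c ct; first by move: ct; rewrite ltnNge g0c.
have [/(IH g0c)[u ut gu]|gtc] := ltnP c (g t); last by exists t => //; rewrite gtc ct.
by exists u => //; rewrite ltnS ltnW.
Qed.

Section Blocks.
Variables (n N : nat) (m : 'I_n -> nat).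

Definition prefix_sum (t : nat) := (\sum_(j < n | (j < t)%N) m j)%N.

Lemma prefix_sum_mono : {homo prefix_sum : t1 t2 / (t1 <= t2)%N}.
Proof.
move=> t1 t2 le12; rewrite /prefix_sum.
rewrite [X in (_ <= X)%N](bigID (fun j : 'I_n => (j < t1)%N)) /=.
rewrite [X in (_ <= X + _)%N](eq_bigl (fun j : 'I_n => (j < t1)%N)) ?leq_addr // => j /=.
by apply/idP/idP => [/andP[]//|j_lt]; rewrite j_lt andbT (leq_trans j_lt le12).
Qed.

Lemma prefix_sumS (k : 'I_n) : prefix_sum k.+1 = (start m k + m k)%N.
Proof.
rewrite /prefix_sum (bigD1 k) //= addnC; congr (_ + _)%N.
by apply: eq_bigl => j; rewrite ltnS andbC -ltn_neqAle.
Qed.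

Lemma prefix_sum0 : prefix_sum 0 = 0%N.
Proof. by rewrite /prefix_sum big_pred0. Qed.

Definition in_block (k : 'I_n) (c : nat) := (start m k <= c < start m k + m k)%N.

Lemma in_block_lt (k k' : 'I_n) c c' :
  (k < k')%N -> in_block k c -> in_block k' c' -> (c < c')%N.
Proof.
move=> lt_kk' /andP[_ ck] /andP[k'c _]; move: ck k'c; rewrite -prefix_sumS.
have : (prefix_sum k.+1 <= start m k')%N := prefix_sum_mono lt_kk'.
lia.
Qed.

Lemma in_block_uniq (k k' : 'I_n) c : in_block k c -> in_block k' c -> k = k'.
Proof.
move=> ck ck'; case: (ltngtP k k') => [lt|lt|/val_inj//].
  by have := in_block_lt lt ck ck'; rewrite ltnn.
by have := in_block_lt lt ck' ck; rewrite ltnn.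
Qed.

Definition on_block (k : 'I_n) (a b : nat) :=
  [&& start m k <= a, a <= b & b < start m k + m k]%N.

Lemma on_block_in_block k a b :
  on_block k a b -> in_block k b /\ in_block k (start m k + (b - a)).
Proof. by rewrite /on_block /in_block => /and3P[]; lia. Qed.

Lemma on_block_uniq k k' a b : on_block k a b -> on_block k' a b -> k = k'.
Proof.
by move=> /on_block_in_block[bk _] /on_block_in_block[bk' _]; apply: in_block_uniq bk bk'.
Qed.

Hypothesis m_sum : (\sum_(k < n) m k)%N = N.

Lemma prefix_sum_size : prefix_sum n = N.
Proof. by rewrite -m_sum; apply: eq_bigl => j; rewrite ltn_ord. Qed.

Lemma in_block_ltN (k : 'I_n) c : in_block k c -> (c < N)%N.
Proof.
case/andP=> _; rewrite -prefix_sumS -prefix_sum_size => ck.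
exact: leq_trans ck (prefix_sum_mono (ltn_ord k)).
Qed.

Lemma in_block_exists c : (c < N)%N -> exists k, in_block k c.
Proof.
move=> cN; have [||u un cu] := @exists_bracket prefix_sum c n.
- by rewrite prefix_sum0.
- by rewrite prefix_sum_size.
by exists (Ordinal un); move: cu; rewrite (prefix_sumS (Ordinal un)).
Qed.

Section BlockToeplitz.
Variables (R : idomainType) (i0 : 'I_N).

(* The pattern of [Zmat m z] with the coordinates [z k l] replaced by entries of
   [Y]: its differential is [block_toeplitz] of the differential of [zvec m z].
   [i0] is a junk default for [insubd]: under [on_block k a b] the index is below [N]. *)
Definition block_toeplitz (Y : 'rV[R]_N) : 'M[R]_N :=
  \matrix_(a < N, b < N) \sum_(k < n)
     if on_block k a b then Y 0 (insubd i0 (start m k + (b - a))%N) else 0.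

Lemma block_toeplitz_on_block Y (a b : 'I_N) k : on_block k a b ->
  block_toeplitz Y a b = Y 0 (insubd i0 (start m k + (b - a))%N).
Proof.
move=> kab; rewrite mxE -big_mkcond (big_pred1 k) // => k'.
by apply/idP/eqP => [/on_block_uniq/(_ kab)//|->].
Qed.

Lemma block_toeplitz_off_block Y (a b : 'I_N) :
  (forall k, ~~ on_block k a b) -> block_toeplitz Y a b = 0.
Proof. by move=> off; rewrite mxE big1 // => k _; rewrite (negbTE (off k)). Qed.

Lemma block_toeplitz_in_block Y (a b : 'I_N) k : in_block k b ->
  block_toeplitz Y a b =
  if (start m k <= a <= b)%N then Y 0 (insubd i0 (start m k + (b - a))%N) else 0.
Proof.
move=> bk; case: ifP => kab.
  by apply: block_toeplitz_on_block; move: bk kab; rewrite /on_block /in_block; lia.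
apply: block_toeplitz_off_block => k'; apply: contraFN kab => k'ab.
have [bk' _] := on_block_in_block k'ab; rewrite -(in_block_uniq bk' bk).
by move: k'ab; rewrite /on_block; lia.
Qed.

Lemma block_toeplitz_start_neq0 (p : 'rV[R]_N) : (forall k, 0 < m k)%N ->
  (forall Y, p *m block_toeplitz Y = 0 -> Y = 0) ->
  forall (k : 'I_n) (a : 'I_N), nat_of_ord a = start m k -> p 0 a != 0.
Proof.
move=> m_pos p_inj k a ak; apply/eqP => pa.
have lastN : ((start m k + m k).-1 < N)%N.
  by apply: (@in_block_ltN k); rewrite /in_block; have := m_pos k; lia.
pose last := Ordinal lastN.
suff /p_inj/rowP/(_ last)/eqP : p *m block_toeplitz (delta_mx 0 last) = 0.
  by rewrite !mxE !eqxx oner_eq0.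
apply/rowP => b; rewrite !mxE; apply: big1 => a' _.
have [->|a'a] := eqVneq a' a; first by rewrite pa mul0r.
have [k' bk'] := in_block_exists (ltn_ord b).
rewrite (block_toeplitz_in_block _ _ bk'); case: ifP => [a'b|_]; last by rewrite mulr0.
rewrite mxE eqxx /=; case: eqP => [/(congr1 val)|_]; last by rewrite mulr0.
have xk' : in_block k' (start m k' + (b - a')) by move: bk' a'b; rewrite /in_block; lia.
rewrite val_insubd (in_block_ltN xk') /= => x_last.
have xk : in_block k (start m k' + (b - a')) by rewrite x_last /in_block; have := m_pos k; lia.
have ek := in_block_uniq xk' xk; subst k'.
have a'a_val : a' != a :> nat by [].
by move: bk' a'b x_last a'a_val; rewrite ak /in_block; lia.
Qed.

Lemma block_toeplitz_ker_eq0 (p : 'rV[R]_N) :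
  (forall (k : 'I_n) (a : 'I_N), nat_of_ord a = start m k -> p 0 a != 0) ->
  forall Y, p *m block_toeplitz Y = 0 -> Y = 0.
Proof.
move=> p_start Y pY.
suff Y_block k d : (d < m k)%N -> Y 0 (insubd i0 (start m k + d))%N = 0.
  apply/rowP => c; have [k ck] := in_block_exists (ltn_ord c).
  have := Y_block k (c - start m k)%N; rewrite !mxE subnKC; last by case/andP: ck.
  by rewrite valKd; apply; move: ck; rewrite /in_block; lia.
elim/ltn_ind: d => d IH dk.
have bk : in_block k (start m k + d) by rewrite /in_block; lia.
have ak : in_block k (start m k) by rewrite /in_block; lia.
pose b := Ordinal (in_block_ltN bk); pose a0 := Ordinal (in_block_ltN ak).
move/rowP/(_ b): pY; rewrite !mxE (bigD1 a0) //= big1 => [|a aa0].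
  rewrite addr0 (block_toeplitz_in_block _ _ (bk : in_block k b)) /= leqnn leq_addr addKn.
  by move/eqP; rewrite mulf_eq0 (negPf (p_start k a0 erefl)) => /eqP.
rewrite (block_toeplitz_in_block _ _ (bk : in_block k b)) /=; case: ifP => [a_b|_]; last by rewrite mulr0.
have a_start : a != start m k :> nat by [].
by rewrite IH ?mulr0 //; move: a_b a_start; lia.
Qed.

End BlockToeplitz.
End Blocks.

Lemma exists_pos_lt2 (F : numFieldType) (d1 d2 : F) : 0 < d1 -> 0 < d2 ->
  exists2 t, 0 < t & (t < d1) && (t < d2).
Proof.
wlog le12 : d1 d2 / d1 <= d2 => [hwlog d1_gt0 d2_gt0|d1_gt0 _].
  have [/hwlog|/hwlog] := orP (real_leVge (gtr0_real d1_gt0) (gtr0_real d2_gt0)).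
    exact.
  by move=> /(_ d2_gt0 d1_gt0)[t ? /andP[? ?]]; exists t => //; apply/andP.
have [] := midf_lt d1_gt0; rewrite add0r => half_gt0 half_lt.
by exists (d1 / 2); rewrite // half_lt (lt_le_trans half_lt).
Qed.

Section Differential.
Variables (C : numClosedFieldType) (N : nat).
Implicit Types (f g : 'rV[C]_N -> C) (w l : 'rV[C]_N).

Lemma eq_is_diff f g w l : f =1 g -> is_diff f w l -> is_diff g w l.
Proof.
move=> fg df eps eps_gt0; have [d d_gt0 fd] := df eps eps_gt0.
by exists d => // h hd; rewrite -!fg; apply: fd.
Qed.

Lemma vnorm_ge0 (h : 'rV[C]_N) : 0 <= vnorm h.
Proof. by apply: sumr_ge0 => i _; apply: normr_ge0. Qed.

Lemma is_diff_cst (c : C) w : is_diff (fun=> c) w 0.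
Proof.
move=> eps eps_gt0; exists 1 => // h _.
rewrite subrr big1 => [|i _]; last by rewrite mxE mul0r.
by rewrite subr0 normr0 mulr_ge0 ?(ltW eps_gt0) ?vnorm_ge0.
Qed.


Lemma vnorm_scale_delta (t : C) (i : 'I_N) : 0 <= t -> vnorm (t *: delta_mx 0 i) = t.
Proof.
move=> t_ge0; rewrite /vnorm (bigD1 i) //= big1 ?addr0 => [|j ji].
  by rewrite !mxE !eqxx mulr1 ger0_norm.
by rewrite !mxE (negbTE ji) andbF mulr0 normr0.
Qed.

Lemma sum_mul_scale_delta l (t : C) (i : 'I_N) :
  \sum_(j < N) l 0 j * (t *: delta_mx 0 i : 'rV_N) 0 j = l 0 i * t.
Proof.
rewrite (bigD1 i) //= big1 ?addr0 => [|j ji]; first by rewrite !mxE !eqxx mulr1.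
by rewrite !mxE (negbTE ji) andbF mulr0 mulr0.
Qed.

Lemma is_diff_unique f w l1 l2 : is_diff f w l1 -> is_diff f w l2 -> l1 = l2.
Proof.
move=> df1 df2; apply/rowP => i; apply/eqP; rewrite -subr_eq0; apply: contraT => l12.
set del := `|l1 0 i - l2 0 i|; have del_gt0 : 0 < del by rewrite normr_gt0.
have eps_gt0 : 0 < del / 4 by rewrite divr_gt0 ?ltr0n.
have [d1 d1_gt0 fd1] := df1 _ eps_gt0; have [d2 d2_gt0 fd2] := df2 _ eps_gt0.
have [t t_gt0 /andP[td1 td2]] := exists_pos_lt2 d1_gt0 d2_gt0.
have := fd1 (t *: delta_mx 0 i); have := fd2 (t *: delta_mx 0 i).
rewrite vnorm_scale_delta ?(ltW t_gt0) // !sum_mul_scale_delta.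
set y := f _ - f w => /(_ td2) le2 /(_ td1) le1.
have : del * t <= del / 4 * t + del / 4 * t.
  have -> : del * t = `|(y - l2 0 i * t) - (y - l1 0 i * t)|.
    by rewrite -[t in del * t](gtr0_norm t_gt0) -normrM; congr `|_|; ring.
  exact: le_trans (ler_normB _ _) (lerD le2 le1).
have -> : del / 4 * t + del / 4 * t = del * t / 2 by field.
have dt_gt0 : 0 < del * t by rewrite mulr_gt0.
by rewrite ler_pdivlMr ?ltr0n // ger_pMr // (ler_nat C 2 1).
Qed.

End Differential.

Lemma bijective_mulmxr (F : fieldType) N (A : 'M[F]_N) :
  bijective (mulmxr A : 'rV_N -> 'rV_N) <-> (forall X : 'rV_N, X *m A = 0 -> X = 0).
Proof.
split=> [/bij_inj A_inj X XA0|A_ker]; first by apply: A_inj; rewrite /= XA0 mul0mx.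
have A_unit : A \in unitmx.
  rewrite -row_free_unit -kermx_eq0; apply/eqP/row_matrixP => i; rewrite row0.
  by apply: A_ker; rewrite -row_mul mulmx_ker row0.
by exists (mulmxr (invmx A)) => X /=; rewrite ?(mulmxK A_unit) ?(mulmxKV A_unit).
Qed.

Lemma phi_row (C : numClosedFieldType) N (Om : 'rV[C]_N -> 'I_N -> 'M[C]_N) r w X :
  phi Om r w X = row r (OmX Om w X).
Proof. by rewrite [RHS]row_sum_delta; apply: eq_bigr => j _; rewrite mxE. Qed.

Lemma phi_mulmxr (C : numClosedFieldType) N (Om : 'rV[C]_N -> 'I_N -> 'M[C]_N) r w :
  phi Om r w =1 mulmxr (\matrix_(l, j) Om w l r j).
Proof.
move=> X; rewrite phi_row; apply/rowP => j.
by rewrite !mxE /OmX summxE; apply: eq_bigr => l _; rewrite !mxE.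
Qed.

Section Pointwise.
Variables (C : numClosedFieldType) (N n : nat) (m : 'I_n -> nat).
Hypothesis m_sum : (\sum_(k < n) m k)%N = N.
Variables (z : 'I_n -> nat -> 'rV[C]_N -> C) (i0 : 'I_N).

Lemma Zmat_on_block v (a b : 'I_N) k : on_block m k a b ->
  Zmat m z v a b = zvec m z v 0 (insubd i0 (start m k + (b - a))%N).
Proof.
move=> kab; have [_ xk] := on_block_in_block kab.
rewrite !mxE val_insubd (in_block_ltN m_sum xk) -!big_mkcond.
rewrite (big_pred1 k) => [|k']; last by apply/idP/eqP => [/(on_block_uniq kab)|->].
rewrite (big_pred1 k) ?addKn // => k'.
by apply/idP/eqP => [/(in_block_uniq xk)|->].
Qed.

Lemma Zmat_off_block v (a b : 'I_N) :
  (forall k, ~~ on_block m k a b) -> Zmat m z v a b = 0.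
Proof. by move=> off; rewrite mxE big1 // => k _; rewrite ifF //; apply: negbTE (off k). Qed.

Variables (Om : 'rV[C]_N -> 'I_N -> 'M[C]_N) (w : 'rV[C]_N) (P J : 'M[C]_N).
Hypothesis dZmat : forall a b : 'I_N,
  is_diff (fun v => Zmat m z v a b) w (\row_l - (invmx P *m Om w l *m P) a b).
Hypothesis dzvec : forall c : 'I_N, is_diff (fun v => zvec m z v 0 c) w (row c J).

Lemma conj_OmX X : invmx P *m OmX Om w X *m P = - block_toeplitz m i0 (X *m J^T).
Proof.
apply/matrixP => a b; rewrite [RHS]mxE.
have -> : (invmx P *m OmX Om w X *m P) a b =
    \sum_l X 0 l * (invmx P *m Om w l *m P) a b.
  rewrite /OmX mulmx_sumr mulmx_suml summxE; apply: eq_bigr => l _.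
  by rewrite -scalemxAr -scalemxAl mxE.
have [k kab|off] := pickP (fun k => on_block m k a b).
  have /rowP dZ := is_diff_unique (dZmat a b)
    (eq_is_diff (fun v => esym (Zmat_on_block v kab)) (dzvec _)).
  rewrite (block_toeplitz_on_block _ _ kab) mxE -sumrN; apply: eq_bigr => l _.
  by have := dZ l; rewrite !mxE => <-; rewrite mulrN opprK.
have /rowP dZ := is_diff_unique (dZmat a b)
  (eq_is_diff (fun v => esym (Zmat_off_block v (fun k => negbT (off k)))) (is_diff_cst 0 w)).
rewrite block_toeplitz_off_block => [|k]; last exact: negbT (off k).
rewrite oppr0 big1 // => l _; have /eqP := dZ l; rewrite !mxE oppr_eq0 => /eqP ->.
by rewrite mulr0.
Qed.

Hypothesis P_unit : P \in unitmx.
Hypothesis J_unit : J \in unitmx.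

Lemma phi_block_toeplitz r X :
  phi Om r w X = - (row r P *m block_toeplitz m i0 (X *m J^T) *m invmx P).
Proof.
rewrite phi_row -mulNmx -mulmxN -conj_OmX -!row_mul.
by rewrite !mulmxA mulmxV // mul1mx mulmxK.
Qed.

Lemma bijective_phi r :
  bijective (phi Om r w) <-> forall Y, row r P *m block_toeplitz m i0 Y = 0 -> Y = 0.
Proof.
have phiA := phi_mulmxr Om r w.
have -> : bijective (phi Om r w) <-> forall X, phi Om r w X = 0 -> X = 0.
  split=> [/eq_bij/(_ _ phiA)/bijective_mulmxr ker X|ker].
    by rewrite phiA; apply: ker.
  apply: eq_bij (fun X => esym (phiA X)); apply/bijective_mulmxr => X XA.
  by apply: ker; rewrite phiA.
have JT_unit : J^T \in unitmx by rewrite unitmx_tr.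
split=> [phi_ker Y pY|ker X phiX].
  have := phi_ker (Y *m invmx J^T).
  rewrite phi_block_toeplitz mulmxKV // pY !mul0mx oppr0 => /(_ erefl) X0.
  by rewrite -(mulmxKV JT_unit Y) X0 mul0mx.
suff /ker XJ0 : row r P *m block_toeplitz m i0 (X *m J^T) = 0.
  by rewrite -(mulmxK JT_unit X) XJ0 mul0mx.
move/eqP: phiX; rewrite phi_block_toeplitz oppr_eq0 => /eqP pY.
by rewrite -(mulmxKV P_unit (_ *m _)) pY mul0mx.
Qed.

End Pointwise.

Theorem mainTheorem3
  (C : numClosedFieldType) (N : nat) (HN : (0 < N)%N)
  (iN : 'I_N) (HiN : nat_of_ord iN = N.-1)
  (W : {pred 'rV[C]_N}) (HW : open_set W)
  (T : 'rV[C]_N -> 'M[C]_N) (Om : 'rV[C]_N -> 'I_N -> 'M[C]_N)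
  (lam : 'I_N -> C)
  (Hlam : forall i j : 'I_N, i != j ->
     forall z : int, z != 0 -> lam i - lam j != z%:~R)
  (* [T, Omega] = 0 *)
  (HTOm : forall w, w \in W -> forall l, T w *m Om w l = Om w l *m T w)
  (* Omega /\ Omega = 0 *)
  (HOmOm : forall w, w \in W -> forall l l',
     Om w l *m Om w l' = Om w l' *m Om w l)
  (* dT + Omega + [Omega, B_inf] = 0 *)
  (HdT : forall w, w \in W -> forall i j : 'I_N,
     is_diff (fun v => T v i j) w
       (\row_(l < N) - (Om w l + (Om w l *m diag_mx (\row_k lam k)
                                   - diag_mx (\row_k lam k) *m Om w l)) i j))
  (* d Omega = 0 (Omega holomorphic and closed) *)
  (HdOm : forall w, w \in W -> forall i j : 'I_N,
     exists2 D : 'M[C]_N, D^T = D &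
       forall l : 'I_N, is_diff (fun v => Om v l i j) w (row l D))
  (P : 'rV[C]_N -> 'M[C]_N)
  (HPhol : forall a b : 'I_N, holo W (fun v => P v a b))
  (HPinv : forall w, w \in W -> P w \in unitmx)
  (n : nat) (m : 'I_n -> nat) (Hm : forall k, (0 < m k)%N)
  (HmN : (\sum_(k < n) m k)%N = N)
  (z : 'I_n -> nat -> 'rV[C]_N -> C)
  (HPT : forall w, w \in W -> invmx (P w) *m T w *m P w = Zmat m z w)
  (HPOm : forall w, w \in W -> forall a b : 'I_N,
     is_diff (fun v => Zmat m z v a b) w
       (\row_(l < N) - (invmx (P w) *m Om w l *m P w) a b))
  (Hdist : forall w, w \in W -> forall k k' : 'I_n, k != k' -> z k 0%N w != z k' 0%N w)
  (Hcoord : coord_system W (zvec m z)) :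
  (forall w, w \in W -> bijective (phi Om iN w)) <->
  (forall w, w \in W -> forall (k : 'I_n) (a : 'I_N),
      nat_of_ord a = start m k -> P w iN a != 0).
Proof.
suff pointwise w : w \in W -> bijective (phi Om iN w) <->
    forall (k : 'I_n) (a : 'I_N), nat_of_ord a = start m k -> P w iN a != 0.
  by split=> H w wW; apply/(pointwise w wW); apply: H.
move=> wW; have [J J_unit dzvec] := Hcoord.2 w wW.
rewrite (bijective_phi HmN iN (HPOm w wW) dzvec (HPinv w wW) J_unit).
split=> [ker k a ak|P_start].
  by have := block_toeplitz_start_neq0 HmN Hm ker ak; rewrite mxE.
by apply: (block_toeplitz_ker_eq0 HmN) => k a ak; rewrite mxE; exact: P_start ak.
Qed.
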